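(* There exist a complex vector field $B=(B_1,B_2)$ on $\mathbb{T}^2\times\mathbb{R}^+$ with values in $\mathbb{C}^2$, continuous and uniformly bounded, and a non-zero, uniformly $C^2$, complex-valued function $u$ on $\mathbb{T}^2\times\mathbb{R}^+$ such that $$\dot u=\Delta u+B\cdot\nabla u=\partial_x^2u+\partial_y^2u+B_1\partial_xu+B_2\partial_yu\quad\text{in }\mathbb{T}^2\times\mathbb{R}^+,$$ and $u$ has double exponential decay: there is a numerical constant $c>0$ such that for all sufficiently large $T$, $$\sup_{\mathbb{T}^2\times\{t\ge T\}}|u(x,y,t)|\le e^{-ce^{cT}}.$$
   Context: $\mathbb{T}^2=(\mathbb{R}/2\pi\mathbb{Z})^2$ with coordinates $(x,y)$; $t\ge0$ is the third coordinate. $\dot u=\partial_tu$; $\Delta$ and $\nabla$ involve only the spatial variables $(x,y)$. Uniformly $C^2$ means all partial derivatives in $(x,y,t)$ of order at most $2$ are continuous and bounded. *)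

From Stdlib Require Import Reals.
From Coquelicot Require Import Coquelicot.
Open Scope R_scope.

(* A function on R^3 = (x,y,t), complex valued. Points of T^2 x [0,oo) are
   represented by (x,y,t) with t >= 0 and periodicity in x and y. *)
Definition fun3 := R -> R -> R -> C.

Definition line (i : nat) (f : fun3) (x y t : R) : R -> C :=
  match i with
  | O => fun s => f s y t
  | S O => fun s => f x s t
  | _ => fun s => f x y s
  end.

Definition coord (i : nat) (x y t : R) : R :=
  match i with O => x | S O => y | _ => t end.

Definition is_partial (i : nat) (f g : fun3) : Prop :=
  forall x y t : R, is_derive (line i f x y t) (coord i x y t) (g x y t).

Definition cont3 (f : fun3) : Prop :=
  forall x y t : R,
    continuous (fun p : R * R * R => f (fst (fst p)) (snd (fst p)) (snd p)) (x, y, t).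

Definition bounded_half (f : fun3) : Prop :=
  exists M : R, forall x y t : R, 0 <= t -> Cmod (f x y t) <= M.

Definition periodic2 (f : fun3) : Prop :=
  forall x y t : R, f (x + 2 * PI) y t = f x y t /\ f x (y + 2 * PI) t = f x y t.

Definition unif_C2 (f : fun3) : Prop :=
  cont3 f /\ bounded_half f /\
  exists (D : nat -> fun3) (DD : nat -> nat -> fun3),
    forall i : nat, (i < 3)%nat ->
      is_partial i f (D i) /\ cont3 (D i) /\ bounded_half (D i) /\
      forall j : nat, (j < 3)%nat ->
        is_partial j (D i) (DD i j) /\ cont3 (DD i j) /\ bounded_half (DD i j).

From Stdlib Require Import Reals Lra Lia ZArith.
From Coquelicot Require Import Coquelicot.
Open Scope R_scope.

(* With theta = e^t + 1, take
     u = cos^4(pi theta/2) e^(-theta^2/2) e^(i M x) + sin^4(pi theta/2) e^(-theta^2/2) e^(i N y),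
   where M (resp. N) is the even (resp. odd) integer in (theta - 1, theta + 1].  M jumps only when
   theta is odd and N only when theta is even, i.e. exactly where the corresponding amplitude
   vanishes together with its first two time derivatives, so u is uniformly C^2 and 2 pi-periodic.
   Put B := (u_t - Delta u) conj(grad u) / |grad u|^2, so that B . grad u = u_t - Delta u.  B is
   bounded: |u_t - Delta u| = O(theta e^(-theta^2/2)), while |grad u| >= theta e^(-theta^2/2) / 6
   because M, N >= theta/2 and cos^8 + sin^8 >= 1/8.  Finally |u| <= e^(-theta^2/2) <= e^(-e^t). *)

(** * Complex-valued calculus *)

Lemma is_derive_C (f : R -> C) (x : R) (l : C) :
  is_derive (fun y => Re (f y)) x (Re l) -> is_derive (fun y => Im (f y)) x (Im l) ->
  is_derive f x l.
Proof.
  intros Hre Him.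
  apply (is_derive_ext (fun y => (Re (f y), Im (f y)) : C)).
  { intros y; destruct (f y); reflexivity. }
  destruct l as [l1 l2].
  apply (filterdiff_comp'_2 _ _ (fun a b => (a, b) : C) x
           (fun y => scal y l1) (fun y => scal y l2) (fun a b => (a, b) : C) Hre Him).
  apply filterdiff_ext_lin with (fun p => p); [| now intros [a b]].
  apply filterdiff_ext with (fun p => p); [now intros [a b] | apply filterdiff_id].
Qed.

Lemma is_derive_RtoC_mult (r : R -> R) (c : C) (t r' : R) :
  is_derive r t r' -> is_derive (fun s => (RtoC (r s) * c)%C) t (RtoC r' * c)%C.
Proof.
  intros Hr; apply is_derive_C; simpl; rewrite !Rmult_0_l, ?Rminus_0_r, ?Rplus_0_r.
  - apply (is_derive_ext (fun y => r y * fst c)); [intros y; symmetry; apply Rminus_0_r |].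
    exact (is_derive_scal_l (V := R_NormedModule) r t r' (fst c) Hr).
  - apply (is_derive_ext (fun y => r y * snd c)); [intros y; symmetry; apply Rplus_0_r |].
    exact (is_derive_scal_l (V := R_NormedModule) r t r' (snd c) Hr).
Qed.

Lemma is_derive_glue {V : NormedModule R_AbsRing} (f f1 f2 : R -> V) (t0 : R) (l : V) :
  locally t0 (fun t => f t = f1 t \/ f t = f2 t) ->
  f1 t0 = f t0 -> f2 t0 = f t0 ->
  is_derive f1 t0 l -> is_derive f2 t0 l -> is_derive f t0 l.
Proof.
  intros Hloc E1 E2 [Hlin D1] [_ D2].
  split; [exact Hlin |].
  intros x Hx eps.
  pose proof (is_filter_lim_locally_unique _ _ Hx); subst x.
  generalize (filter_and _ _ Hloc (filter_and _ _ (D1 t0 Hx eps) (D2 t0 Hx eps))).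
  apply filter_imp.
  intros t [[-> | ->] [H1 H2]]; [rewrite <- E1 | rewrite <- E2]; assumption.
Qed.

Lemma continuous_glue {U V : UniformSpace} (f f1 f2 : U -> V) (p : U) :
  locally p (fun q => f q = f1 q \/ f q = f2 q) ->
  f1 p = f p -> f2 p = f p ->
  continuous f1 p -> continuous f2 p -> continuous f p.
Proof.
  intros Hloc E1 E2 C1 C2 P HP.
  assert (H1 := C1 P ltac:(now rewrite E1)).
  assert (H2 := C2 P ltac:(now rewrite E2)).
  unfold filtermap in H1, H2 |- *.
  generalize (filter_and _ _ Hloc (filter_and _ _ H1 H2)).
  apply filter_imp; intros q [[-> | ->] [A B]]; assumption.
Qed.

Section ComplexContinuity.

Context {U : UniformSpace}.

Lemma continuous_Cpair (g h : U -> R) (p : U) :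
  continuous g p -> continuous h p -> continuous (fun q => (g q, h q) : C) p.
Proof.
  intros Hg Hh.
  apply (continuous_comp_2 _ _ (fun a b => (a, b) : C)); [exact Hg | exact Hh |].
  apply (filterlim_ext (fun z : R * R => z)); [now intros [a b] | apply continuous_id].
Qed.

Lemma continuous_C (f : U -> C) (p : U) :
  continuous (fun q => Re (f q)) p -> continuous (fun q => Im (f q)) p -> continuous f p.
Proof.
  intros Hre Him.
  assert (E : forall q, (Re (f q), Im (f q)) = f q) by (intros q; now destruct (f q)).
  unfold continuous; rewrite <- (E p).
  apply (filterlim_ext _ _ E), continuous_Cpair; assumption.
Qed.

Lemma continuous_Re (f : U -> C) (p : U) : continuous f p -> continuous (fun q => Re (f q)) p.
Proof. intros H; apply (continuous_comp f fst); [exact H | apply continuous_fst]. Qed.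

Lemma continuous_Im (f : U -> C) (p : U) : continuous f p -> continuous (fun q => Im (f q)) p.
Proof. intros H; apply (continuous_comp f snd); [exact H | apply continuous_snd]. Qed.

Lemma continuous_Rminus_fun (f g : U -> R) (p : U) :
  continuous f p -> continuous g p -> continuous (fun q => f q - g q) p.
Proof.
  intros; apply (continuous_plus (V := R_NormedModule)); [assumption |].
  apply (continuous_opp (V := R_NormedModule)); assumption.
Qed.

(* Matching syntactically matters: unleashing [apply] of these lemmas on arbitrary continuity
   goals makes unification diverge. *)
Ltac continuous_R :=
  repeat match goal with
  | |- continuous (fun q => @?a q + @?b q) _ => apply (continuous_plus (V := R_NormedModule) a b)
  | |- continuous (fun q => @?a q - @?b q) _ => apply (continuous_Rminus_fun a b)
  | |- continuous (fun q => @?a q * @?b q) _ => apply (continuous_mult (K := R_AbsRing) a b)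
  | |- continuous (fun q => - @?a q) _ => apply (continuous_opp (V := R_NormedModule) a)
  | |- continuous (fun q => Re (@?f q)) _ => apply (continuous_Re f)
  | |- continuous (fun q => Im (@?f q)) _ => apply (continuous_Im f)
  | |- continuous (fun q => fst (@?f q)) _ => apply (continuous_Re f)
  | |- continuous (fun q => snd (@?f q)) _ => apply (continuous_Im f)
  | |- continuous (fun _ => _) _ => apply continuous_const
  end.

Lemma continuous_Cplus_fun (f g : U -> C) (p : U) :
  continuous f p -> continuous g p -> continuous (fun q => (f q + g q)%C) p.
Proof. intros; apply continuous_C; simpl; continuous_R; assumption. Qed.

Lemma continuous_Cminus_fun (f g : U -> C) (p : U) :
  continuous f p -> continuous g p -> continuous (fun q => (f q - g q)%C) p.
Proof. intros; apply continuous_C; simpl; continuous_R; assumption. Qed.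

Lemma continuous_Cmult_fun (f g : U -> C) (p : U) :
  continuous f p -> continuous g p -> continuous (fun q => (f q * g q)%C) p.
Proof. intros; apply continuous_C; simpl; continuous_R; assumption. Qed.

Lemma continuous_Cconj_fun (f : U -> C) (p : U) :
  continuous f p -> continuous (fun q => Cconj (f q)) p.
Proof. intros; apply continuous_C; simpl; continuous_R; assumption. Qed.

Lemma continuous_RtoC_fun (f : U -> R) (p : U) :
  continuous f p -> continuous (fun q => RtoC (f q)) p.
Proof. intros; apply continuous_C; simpl; continuous_R; assumption. Qed.

Lemma continuous_Cmod_sq (f : U -> C) (p : U) :
  continuous f p -> continuous (fun q => Cmod (f q) ^ 2) p.
Proof.
  intros; apply (continuous_ext (fun q => Re (f q) * Re (f q) + Im (f q) * Im (f q))).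
  - intros q; rewrite Cmod2_alt; simpl; rewrite !Rmult_1_r; reflexivity.
  - continuous_R; assumption.
Qed.

End ComplexContinuity.

Definition cis (s : R) : C := (cos s, sin s).

Lemma Cmod_cis (s : R) : Cmod (cis s) = 1.
Proof.
  unfold Cmod, cis; cbn [fst snd].
  replace (cos s ^ 2 + sin s ^ 2) with 1 by (pose proof (sin2_cos2 s); unfold Rsqr in *; nra).
  apply sqrt_1.
Qed.

Lemma cis_period_IZR (k : Z) (s : R) : cis (IZR k * (s + 2 * PI)) = cis (IZR k * s).
Proof.
  assert (Hnat : forall n : nat, cis (INR n * (s + 2 * PI)) = cis (INR n * s)).
  { intros n; unfold cis.
    replace (INR n * (s + 2 * PI)) with (INR n * s + 2 * INR n * PI) by ring.
    rewrite cos_period, sin_period; reflexivity. }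
  destruct (Z_le_gt_dec 0 k) as [Hk | Hk].
  - rewrite <- (Z2Nat.id k Hk), <- INR_IZR_INZ; apply Hnat.
  - replace k with (- Z.of_nat (Z.to_nat (- k)))%Z by lia.
    rewrite opp_IZR, <- INR_IZR_INZ, !Ropp_mult_distr_l_reverse.
    generalize (Hnat (Z.to_nat (- k))); unfold cis; rewrite !cos_neg, !sin_antisym.
    intros E; inversion E as [[Ec Es]]; rewrite Ec, Es; reflexivity.
Qed.

(** * Integer parts *)

(* [Int_part_left z] is the limit of [Int_part w] as [w] increases to [z]; it differs from
   [Int_part z] exactly when [z] is an integer. *)
Definition Int_part_left (z : R) : Z := (- Int_part (- z) - 1)%Z.

Lemma Int_part_bounds (z : R) : IZR (Int_part z) <= z < IZR (Int_part z) + 1.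
Proof. destruct (base_Int_part z); lra. Qed.

Lemma Int_part_left_bounds (z : R) : IZR (Int_part_left z) < z <= IZR (Int_part_left z) + 1.
Proof.
  unfold Int_part_left; destruct (Int_part_bounds (- z)).
  rewrite minus_IZR, opp_IZR; lra.
Qed.

Lemma Int_part_left_neq (z : R) : Int_part_left z <> Int_part z -> z = IZR (Int_part z).
Proof.
  intros Hneq.
  destruct (Int_part_bounds z) as [H1 H2]; destruct (Int_part_left_bounds z) as [H3 H4].
  assert (Hlt : (Int_part_left z < Int_part z + 1)%Z) by (apply lt_IZR; rewrite plus_IZR; lra).
  assert (Hle : (Int_part z <= Int_part_left z + 1)%Z) by (apply le_IZR; rewrite plus_IZR; lra).
  assert (E : IZR (Int_part_left z) = IZR (Int_part z) - 1).
  { rewrite <- minus_IZR; f_equal; lia. }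
  lra.
Qed.

Lemma locally_Int_part_incr (g : R -> R) (t0 : R) :
  continuous g t0 -> (forall a b, a < b -> g a < g b) ->
  locally t0 (fun t => (t0 <= t -> Int_part (g t) = Int_part (g t0)) /\
                       (t < t0 -> Int_part (g t) = Int_part_left (g t0))).
Proof.
  intros Hc Hincr.
  destruct (Int_part_bounds (g t0)); destruct (Int_part_left_bounds (g t0)).
  assert (Hd1 := Rmin_l (IZR (Int_part (g t0)) + 1 - g t0) (g t0 - IZR (Int_part_left (g t0)))).
  assert (Hd2 := Rmin_r (IZR (Int_part (g t0)) + 1 - g t0) (g t0 - IZR (Int_part_left (g t0)))).
  set (d := Rmin (IZR (Int_part (g t0)) + 1 - g t0) (g t0 - IZR (Int_part_left (g t0)))) in *.
  assert (Hd : 0 < d) by (apply Rmin_pos; lra).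
  generalize (proj1 (filterlim_locally g (g t0)) Hc (mkposreal d Hd)); apply filter_imp.
  intros t Hball.
  unfold ball in Hball; simpl in Hball; unfold AbsRing_ball, abs, minus, plus, opp in Hball.
  simpl in Hball; apply Rabs_def2 in Hball.
  split; intros Ht; symmetry; apply Int_part_spec.
  - destruct Ht as [Ht | <-]; [specialize (Hincr _ _ Ht) |]; lra.
  - specialize (Hincr _ _ Ht); lra.
Qed.

(** * Amplitudes *)

Definition theta (t : R) : R := exp t + 1.
Definition gauss (t : R) : R := exp (- theta t ^ 2 / 2).
Definition phase (j : Z) (t : R) : R := PI / 2 * (theta t - IZR j).

Lemma theta_gt_1 (t : R) : 1 < theta t.
Proof. unfold theta; pose proof (exp_pos t); lra. Qed.

Lemma theta_lt (a b : R) : a < b -> theta a < theta b.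
Proof. intros H; unfold theta; apply Rplus_lt_compat_r, exp_increasing, H. Qed.

Lemma gauss_pos (t : R) : 0 < gauss t.
Proof. apply exp_pos. Qed.

Lemma pow6_mul_exp_le (x : R) : x ^ 6 * exp (- x ^ 2 / 2) <= 216.
Proof.
  set (w := x ^ 2 / 6).
  assert (Hw : 0 <= w) by (unfold w; pose proof (pow2_ge_0 x); lra).
  assert (Hew : w <= exp w) by (pose proof (exp_ineq1_le w); lra).
  assert (E : exp (- x ^ 2 / 2) * (exp w * exp w * exp w) = 1).
  { rewrite <- !exp_plus, <- exp_0; f_equal; unfold w; field. }
  assert (w * w * w <= exp w * exp w * exp w) by (apply Rmult_le_compat; try nra).
  replace (x ^ 6) with (216 * (w * w * w)) by (unfold w; field).
  pose proof (exp_pos (- x ^ 2 / 2)); nra.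
Qed.

Lemma gauss_le_exp_exp (T t : R) : T <= t -> gauss t <= exp (- exp T).
Proof.
  intros HT; unfold gauss, theta.
  assert (exp T <= exp t) by (destruct HT as [HT | ->]; [apply Rlt_le, exp_increasing | ]; lra).
  pose proof (exp_pos T).
  apply Rlt_le, exp_increasing; nra.
Qed.

Definition profile_poly (j : Z) (t : R) : R :=
  2 * PI * cos (phase j t) ^ 3 * sin (phase j t) + theta t * cos (phase j t) ^ 4.

Definition profile (n : nat) (j : Z) (t : R) : R :=
  match n with
  | O => cos (phase j t) ^ 4 * gauss t
  | 1%nat => - exp t * profile_poly j t * gauss t
  | _ => - exp t * gauss t *
         ((1 - theta t * exp t) * profile_poly j t
          + PI * exp t * (PI * cos (phase j t) ^ 4 - 3 * PI * cos (phase j t) ^ 2 * sin (phase j t) ^ 2)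
          + exp t * cos (phase j t) ^ 4
          - 2 * PI * theta t * exp t * cos (phase j t) ^ 3 * sin (phase j t))
  end.

(* [auto_derive] states its equations in the carrier of [R_AbsRing], which [ring] and [field]
   do not recognise as [R]. *)
Ltac change_eq_R := match goal with |- ?a = ?b => change (@eq R a b) end.

Lemma is_derive_profile (n : nat) (j : Z) (t : R) :
  (n < 2)%nat -> is_derive (profile n j) t (profile (S n) j t).
Proof.
  intros Hn; destruct n as [|[|n]]; [| | lia];
    unfold profile, profile_poly, gauss, phase, theta; auto_derive; auto;
    change_eq_R; unfold Rminus, Rdiv; simpl pow; field.
Qed.

Lemma continuous_profile (n : nat) (j : Z) (t : R) : continuous (profile n j) t.
Proof.
  apply (ex_derive_continuous (K := R_AbsRing) (V := R_NormedModule)).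
  destruct n as [|[|n]]; unfold profile, profile_poly, gauss, phase, theta; auto_derive; auto.
Qed.

Lemma profile_eq_0 (n : nat) (j : Z) (t : R) : cos (phase j t) = 0 -> profile n j t = 0.
Proof. intros H; destruct n as [|[|n]]; unfold profile, profile_poly; rewrite H; ring. Qed.

Lemma Rabs_plus_bound (a b A B : R) : Rabs a <= A -> Rabs b <= B -> Rabs (a + b) <= A + B.
Proof. intros; eapply Rle_trans; [apply Rabs_triang | lra]. Qed.

Lemma Rabs_minus_bound (a b A B : R) : Rabs a <= A -> Rabs b <= B -> Rabs (a - b) <= A + B.
Proof. intros; eapply Rle_trans; [apply Rabs_triang | rewrite Rabs_Ropp; lra]. Qed.

Lemma Rabs_mult_bound (a b A B : R) : Rabs a <= A -> Rabs b <= B -> Rabs (a * b) <= A * B.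
Proof. intros; rewrite Rabs_mult; apply Rmult_le_compat; auto; apply Rabs_pos. Qed.

Lemma Rabs_pow_bound (a A : R) (n : nat) : Rabs a <= A -> Rabs (a ^ n) <= A ^ n.
Proof. intros; rewrite <- RPow_abs; apply pow_incr; split; [apply Rabs_pos | assumption]. Qed.

Lemma Rabs_opp_bound (a A : R) : Rabs a <= A -> Rabs (- a) <= A.
Proof. now rewrite Rabs_Ropp. Qed.

Lemma Rabs_nonneg_bound (a : R) : 0 <= a -> Rabs a <= a.
Proof. intros; rewrite Rabs_right; lra. Qed.

Ltac bound_Rabs :=
  repeat match goal with
  | H : Rabs ?a <= _ |- Rabs ?a <= _ => exact H
  | |- Rabs (- _) <= _ => apply Rabs_opp_bound
  | |- Rabs (_ + _) <= _ => eapply Rabs_plus_bound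
  | |- Rabs (_ - _) <= _ => eapply Rabs_minus_bound
  | |- Rabs (_ * _) <= _ => eapply Rabs_mult_bound
  | |- Rabs (_ ^ _) <= _ => eapply Rabs_pow_bound
  | |- Rabs (IZR _) <= _ => apply Rabs_nonneg_bound; lra
  end.

Lemma profile_bound (n : nat) (j : Z) (t : R) :
  Rabs (profile n j t) <= 91 * theta t ^ 4 * gauss t.
Proof.
  assert (Hc : Rabs (cos (phase j t)) <= 1) by (apply Rabs_le, COS_bound).
  assert (Hs : Rabs (sin (phase j t)) <= 1) by (apply Rabs_le, SIN_bound).
  assert (He : Rabs (exp t) <= theta t).
  { unfold theta; pose proof (exp_pos t); rewrite Rabs_right; lra. }
  assert (Hpi : Rabs PI <= 4) by (pose proof PI_RGT_0; pose proof PI_4; rewrite Rabs_right; lra).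
  pose proof (theta_gt_1 t) as Ht1; pose proof (gauss_pos t) as HG.
  assert (Ht : Rabs (theta t) <= theta t) by (apply Rabs_nonneg_bound; lra).
  assert (HGa : Rabs (gauss t) <= gauss t) by (apply Rabs_nonneg_bound; lra).
  assert (Hmono : forall k : nat, gauss t * theta t ^ k <= gauss t * theta t ^ S k).
  { intros k; simpl.
    assert (0 < gauss t * theta t ^ k) by (apply Rmult_lt_0_compat; [lra | apply pow_lt; lra]).
    nra. }
  pose proof (Hmono 0%nat); pose proof (Hmono 1%nat); pose proof (Hmono 2%nat);
    pose proof (Hmono 3%nat); simpl in *.
  destruct n as [|[|n]]; unfold profile, profile_poly;
    (eapply Rle_trans; [bound_Rabs | ring_simplify; lra]).
Qed.

Lemma cos_phase_1 (t : R) : cos (phase 1 t) = sin (phase 0 t).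
Proof.
  rewrite <- cos_shift, <- (cos_neg (PI / 2 - phase 0 t)); f_equal.
  unfold phase; simpl; ring.
Qed.

Lemma cos4_sin4_bounds (x : R) : 1 / 2 <= cos x ^ 4 + sin x ^ 4 <= 1.
Proof.
  pose proof (sin2_cos2 x) as H; unfold Rsqr in H.
  pose proof (pow2_ge_0 (cos x ^ 2 - sin x ^ 2)).
  pose proof (pow2_ge_0 (cos x)); pose proof (pow2_ge_0 (sin x)).
  split; nra.
Qed.

Lemma cos8_sin8_lower (x : R) : 1 <= 8 * (cos x ^ 8 + sin x ^ 8).
Proof.
  pose proof (cos4_sin4_bounds x).
  pose proof (pow2_ge_0 (cos x ^ 4 - sin x ^ 4)).
  nra.
Qed.

Lemma profile_residual_bound (j : Z) (t k : R) :
  theta t - 1 < k <= theta t + 1 ->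
  (profile 1 j t + k ^ 2 * profile 0 j t) ^ 2 <= 144 * theta t ^ 2 * gauss t ^ 2.
Proof.
  intros Hk.
  pose proof (theta_gt_1 t) as Ht; pose proof (gauss_pos t) as HG.
  assert (He : exp t = theta t - 1) by (unfold theta; ring).
  pose proof (sin2_cos2 (phase j t)) as Hcs; unfold Rsqr in Hcs.
  pose proof PI_RGT_0; pose proof PI_4.
  set (c := cos (phase j t)) in *; set (s := sin (phase j t)) in *.
  set (W := c * (k ^ 2 - theta t * exp t) - 2 * PI * exp t * s).
  assert (E : profile 1 j t + k ^ 2 * profile 0 j t = gauss t * c ^ 3 * W)
    by (unfold W, profile, profile_poly; fold c s; ring).
  assert (HW : W ^ 2 <= 144 * theta t ^ 2).
  { assert (Hd : Rabs (k ^ 2 - theta t * exp t) <= 3 * theta t + 1).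
    { assert (0 < (k - (theta t - 1)) * (k + theta t - 1)) by (apply Rmult_lt_0_compat; lra).
      rewrite He; apply Rabs_le; split; nra. }
    assert (Hc : Rabs c <= 1) by (apply Rabs_le, COS_bound).
    assert (Hs : Rabs s <= 1) by (apply Rabs_le, SIN_bound).
    assert (HWa : Rabs W <= 12 * theta t).
    { unfold W; eapply Rle_trans; [eapply Rabs_minus_bound |].
      - eapply Rabs_mult_bound; eassumption.
      - rewrite !Rabs_mult, He, (Rabs_right 2), (Rabs_right PI), (Rabs_right (theta t - 1)) by lra.
        apply Rle_refl.
      - pose proof (Rabs_pos s).
        assert (0 <= (theta t - 1) * Rabs s <= theta t - 1) by (split; nra).
        nra. }
    rewrite <- (pow2_abs W); pose proof (Rabs_pos W); nra. }
  rewrite E.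
  assert (Hc6 : c ^ 6 <= 1).
  { assert (0 <= c ^ 2 <= 1) by (pose proof (pow2_ge_0 c); pose proof (pow2_ge_0 s); nra).
    replace (c ^ 6) with ((c ^ 2) ^ 3) by ring.
    rewrite <- (pow1 3); apply pow_incr; lra. }
  replace ((gauss t * c ^ 3 * W) ^ 2) with (gauss t ^ 2 * c ^ 6 * W ^ 2) by ring.
  assert (0 <= c ^ 6) by (replace (c ^ 6) with ((c ^ 3) ^ 2) by ring; apply pow2_ge_0).
  pose proof (pow2_ge_0 W); pose proof (pow2_ge_0 (gauss t)).
  apply Rle_trans with (gauss t ^ 2 * 1 * (144 * theta t ^ 2)); [| lra].
  apply Rmult_le_compat; nra.
Qed.

Lemma profile_energy_lower (t k0 k1 : R) :
  theta t <= 2 * k0 -> theta t <= 2 * k1 ->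
  theta t ^ 2 * gauss t ^ 2 <= 32 * ((k0 * profile 0 0 t) ^ 2 + (k1 * profile 0 1 t) ^ 2).
Proof.
  intros H0 H1; pose proof (theta_gt_1 t); pose proof (gauss_pos t).
  unfold profile; rewrite cos_phase_1.
  pose proof (cos8_sin8_lower (phase 0 t)).
  set (c := cos (phase 0 t)) in *; set (s := sin (phase 0 t)) in *.
  replace ((k0 * (c ^ 4 * gauss t)) ^ 2 + (k1 * (s ^ 4 * gauss t)) ^ 2)
    with (gauss t ^ 2 * (k0 ^ 2 * c ^ 8 + k1 ^ 2 * s ^ 8)) by ring.
  assert (theta t ^ 2 <= 4 * k0 ^ 2) by nra; assert (theta t ^ 2 <= 4 * k1 ^ 2) by nra.
  assert (0 <= c ^ 8) by (replace (c ^ 8) with ((c ^ 4) ^ 2) by ring; apply pow2_ge_0).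
  assert (0 <= s ^ 8) by (replace (s ^ 8) with ((s ^ 4) ^ 2) by ring; apply pow2_ge_0).
  assert (theta t ^ 2 <= 32 * (k0 ^ 2 * c ^ 8 + k1 ^ 2 * s ^ 8)) by nra.
  pose proof (pow2_ge_0 (gauss t)); nra.
Qed.

(** * Frequencies *)

(* [freq j t] is the integer of the parity of [j] in (theta t - 1, theta t + 1].  It jumps
   exactly when theta t - j is an odd integer, i.e. where cos (phase j t) vanishes. *)
Definition freq (j : Z) (t : R) : R := IZR (2 * Int_part ((theta t + 1 - IZR j) / 2) + j).
Definition freq_left (j : Z) (t : R) : R :=
  IZR (2 * Int_part_left ((theta t + 1 - IZR j) / 2) + j).

Lemma freq_bounds (j : Z) (t : R) : theta t - 1 < freq j t <= theta t + 1.
Proof.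
  unfold freq; rewrite plus_IZR, mult_IZR.
  destruct (Int_part_bounds ((theta t + 1 - IZR j) / 2)); lra.
Qed.

Lemma theta_le_double_freq (j : Z) (t : R) : theta t <= 2 * freq j t.
Proof.
  pose proof (freq_bounds j t); pose proof (theta_gt_1 t).
  unfold freq in *; set (z := (2 * Int_part _ + j)%Z) in *.
  assert (Hz : (0 < z)%Z) by (apply lt_IZR; lra).
  assert (1 <= IZR z) by (apply IZR_le; lia).
  lra.
Qed.

Lemma locally_freq (j : Z) (t0 : R) :
  locally t0 (fun t => (t0 <= t -> freq j t = freq j t0) /\ (t < t0 -> freq j t = freq_left j t0)).
Proof.
  assert (H : locally t0 (fun t =>
      (t0 <= t -> Int_part ((theta t + 1 - IZR j) / 2) = Int_part ((theta t0 + 1 - IZR j) / 2)) /\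
      (t < t0 -> Int_part ((theta t + 1 - IZR j) / 2) = Int_part_left ((theta t0 + 1 - IZR j) / 2)))).
  { apply (locally_Int_part_incr (fun t => (theta t + 1 - IZR j) / 2)).
    - apply (ex_derive_continuous (K := R_AbsRing) (V := R_NormedModule)).
      unfold theta; auto_derive; auto.
    - intros a b Hab; pose proof (theta_lt a b Hab); lra. }
  apply filter_imp with (2 := H).
  intros t [H1 H2]; unfold freq, freq_left; split; intros Ht; [rewrite H1 | rewrite H2]; auto.
Qed.

Lemma freq_jump_cos_phase (j : Z) (t : R) : freq_left j t <> freq j t -> cos (phase j t) = 0.
Proof.
  intros Hneq.
  assert (Hz : Int_part_left ((theta t + 1 - IZR j) / 2) <> Int_part ((theta t + 1 - IZR j) / 2))
    by (intros E; apply Hneq; unfold freq, freq_left; rewrite E; reflexivity).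
  apply Int_part_left_neq in Hz.
  apply cos_eq_0_1; exists (Int_part ((theta t + 1 - IZR j) / 2) - 1)%Z.
  unfold phase; rewrite minus_IZR, <- Hz; field.
Qed.

(** * Modes *)

Definition mode_at (a : R -> C) (n : nat) (j : Z) (k s t : R) : C :=
  (RtoC (profile n j t) * (a k * cis (k * s)))%C.

Definition mode (a : R -> C) (n : nat) (j : Z) (s t : R) : C := mode_at a n j (freq j t) s t.

Lemma mode_at_freq_left (a : R -> C) (n : nat) (j : Z) (s t : R) :
  mode_at a n j (freq_left j t) s t = mode a n j s t.
Proof.
  unfold mode; destruct (Req_dec (freq_left j t) (freq j t)) as [-> | Hneq]; [reflexivity |].
  unfold mode_at; rewrite (profile_eq_0 n j t (freq_jump_cos_phase j t Hneq)), !Cmult_0_l.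
  reflexivity.
Qed.

Lemma is_derive_mode_s (a b : R -> C) (n : nat) (j : Z) (s t : R) :
  (forall k, b k = (Ci * RtoC k * a k)%C) ->
  is_derive (fun s => mode a n j s t) s (mode b n j s t).
Proof.
  intros Hb; unfold mode, mode_at, cis; rewrite Hb.
  apply is_derive_C; simpl; auto_derive; auto; change_eq_R; ring.
Qed.

Lemma is_derive_mode_t (a : R -> C) (n : nat) (j : Z) (s t0 : R) :
  (n < 2)%nat -> is_derive (fun t => mode a n j s t) t0 (mode a (S n) j s t0).
Proof.
  intros Hn.
  assert (Hbranch : forall k, is_derive (fun t => mode_at a n j k s t) t0 (mode_at a (S n) j k s t0))
    by (intros k; apply is_derive_RtoC_mult, is_derive_profile, Hn).
  apply (is_derive_glue _ (fun t => mode_at a n j (freq j t0) s t)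
                          (fun t => mode_at a n j (freq_left j t0) s t)).
  - generalize (locally_freq j t0); apply filter_imp; intros t [Hr Hl]; unfold mode.
    destruct (Rle_lt_dec t0 t) as [Ht | Ht]; [left; rewrite Hr | right; rewrite Hl]; auto.
  - reflexivity.
  - apply mode_at_freq_left.
  - apply Hbranch.
  - rewrite <- mode_at_freq_left; apply Hbranch.
Qed.

Lemma continuous_mode (a : R -> C) (n : nat) (j : Z) (s0 t0 : R) :
  continuous (fun p : R * R => mode a n j (fst p) (snd p)) (s0, t0).
Proof.
  assert (Hbranch : forall k,
             continuous (fun p : R * R => mode_at a n j k (fst p) (snd p)) (s0, t0)).
  { intros k; unfold mode_at; apply continuous_Cmult_fun.
    - apply continuous_RtoC_fun, (continuous_comp snd (profile n j));
        [apply continuous_snd | apply continuous_profile].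
    - apply continuous_Cmult_fun; [apply continuous_const |].
      apply continuous_Cpair; apply (continuous_comp fst (fun s => _ (k * s)));
        try apply continuous_fst;
        apply (ex_derive_continuous (K := R_AbsRing) (V := R_NormedModule)); auto_derive; auto. }
  apply (continuous_glue _ (fun p : R * R => mode_at a n j (freq j t0) (fst p) (snd p))
                           (fun p : R * R => mode_at a n j (freq_left j t0) (fst p) (snd p))).
  - generalize (continuous_snd s0 t0 _ (locally_freq j t0)); unfold filtermap.
    apply filter_imp; intros [s t] [Hr Hl]; unfold mode; simpl in *.
    destruct (Rle_lt_dec t0 t) as [Ht | Ht]; [left; rewrite Hr | right; rewrite Hl]; auto.
  - reflexivity.
  - apply mode_at_freq_left.
  - apply Hbranch.
  - apply Hbranch.
Qed.

Lemma continuous_mode_comp {U : UniformSpace} (a : R -> C) (n : nat) (j : Z)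
    (sigma tau : U -> R) (p : U) :
  continuous sigma p -> continuous tau p -> continuous (fun q => mode a n j (sigma q) (tau q)) p.
Proof. intros; apply (continuous_comp_2 sigma tau (mode a n j)); auto; apply continuous_mode. Qed.

Lemma Cmod_mode (a : R -> C) (n : nat) (j : Z) (s t : R) :
  Cmod (mode a n j s t) = Rabs (profile n j t) * Cmod (a (freq j t)).
Proof. unfold mode, mode_at; rewrite !Cmod_mult, Cmod_R, Cmod_cis; ring. Qed.

Lemma Cmod_mode_bound (a : R -> C) (n : nat) (j : Z) (s t : R) :
  (forall k, Cmod (a k) <= 1 + k ^ 2) -> Cmod (mode a n j s t) <= 455 * 216.
Proof.
  intros Ha; rewrite Cmod_mode.
  pose proof (profile_bound n j t); pose proof (Ha (freq j t)).
  pose proof (freq_bounds j t); pose proof (theta_gt_1 t); pose proof (gauss_pos t).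
  pose proof (pow6_mul_exp_le (theta t)); fold (gauss t) in *.
  assert (1 + freq j t ^ 2 <= 5 * theta t ^ 2) by nra.
  apply Rle_trans with (91 * theta t ^ 4 * gauss t * (5 * theta t ^ 2)).
  - apply Rmult_le_compat; try apply Rabs_pos; try apply Cmod_ge_0; lra.
  - replace (91 * theta t ^ 4 * gauss t * (5 * theta t ^ 2)) with (455 * (theta t ^ 6 * gauss t))
      by ring.
    lra.
Qed.

Lemma mode_periodic (a : R -> C) (n : nat) (j : Z) (s t : R) :
  mode a n j (s + 2 * PI) t = mode a n j s t.
Proof. unfold mode, mode_at, freq; rewrite cis_period_IZR; reflexivity. Qed.

Lemma mode_zero (n : nat) (j : Z) (s t : R) : mode (fun _ => 0%C) n j s t = 0%C.
Proof. unfold mode, mode_at; rewrite Cmult_0_l, Cmult_0_r; reflexivity. Qed.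

(** * The solution *)

(* [u_der (nx, ny, nt)] is the derivative of order nx in x, ny in y and nt <= 2 in t of
   [u := u_der (0, 0, 0)].  Differentiating e^(i k s) multiplies it by i k, hence [coef p 0];
   a derivative in the variable of the other mode kills a mode, hence [coef p (S q)]. *)
Definition coef (p q : nat) (k : R) : C :=
  match q with O => (Ci * RtoC k) ^ p | S _ => 0 end.

Definition u_der (α : nat * nat * nat) : fun3 :=
  let '(nx, ny, nt) := α in
  fun x y t => (mode (coef nx ny) nt 0 x t + mode (coef ny nx) nt 1 y t)%C.

Definition bump (i : nat) (α : nat * nat * nat) : nat * nat * nat :=
  let '(nx, ny, nt) := α in
  match i with O => (S nx, ny, nt) | 1%nat => (nx, S ny, nt) | _ => (nx, ny, S nt) end.

Lemma coef_S (p q : nat) (k : R) : coef (S p) q k = (Ci * RtoC k * coef p q k)%C.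
Proof. destruct q; simpl; [reflexivity | ring]. Qed.

Lemma Cmod_coef_le (p q : nat) (k : R) : (p <= 2)%nat -> Cmod (coef p q k) <= 1 + k ^ 2.
Proof.
  intros Hp; pose proof (pow2_ge_0 k).
  destruct q; simpl; [| rewrite Cmod_0; lra].
  rewrite Cmod_pow, Cmod_mult, Cmod_Ci, Cmod_R, Rmult_1_l.
  destruct p as [|[|[|p]]]; [| | | lia]; simpl; rewrite ?Rmult_1_r.
  - lra.
  - assert (Rabs k * Rabs k = k * k) by (rewrite <- Rabs_mult; apply Rabs_right; nra).
    pose proof (pow2_ge_0 (Rabs k - 1)); nra.
  - rewrite <- Rabs_mult, Rabs_right; nra.
Qed.

Lemma is_partial_u_der (i : nat) (α : nat * nat * nat) :
  (snd α < 2)%nat -> is_partial i (u_der α) (u_der (bump i α)).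
Proof.
  destruct α as [[nx ny] nt]; simpl; intros Hnt x y t.
  destruct i as [|[|i]]; simpl.
  - replace (mode (coef ny (S nx)) nt 1 y t) with (@zero C_R_NormedModule)
      by (symmetry; apply mode_zero).
    apply (is_derive_plus (V := C_R_NormedModule)); [| apply is_derive_const].
    apply is_derive_mode_s; intros k; apply coef_S.
  - replace (mode (coef nx (S ny)) nt 0 x t) with (@zero C_R_NormedModule)
      by (symmetry; apply mode_zero).
    apply (is_derive_plus (V := C_R_NormedModule)); [apply is_derive_const |].
    apply is_derive_mode_s; intros k; apply coef_S.
  - apply (is_derive_plus (V := C_R_NormedModule)); apply is_derive_mode_t, Hnt.
Qed.

Lemma u_der_regular (α : nat * nat * nat) :
  (fst (fst α) <= 2)%nat -> (snd (fst α) <= 2)%nat ->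
  cont3 (u_der α) /\ bounded_half (u_der α) /\ periodic2 (u_der α).
Proof.
  destruct α as [[nx ny] nt]; simpl; intros Hx Hy; split; [| split].
  - intros x y t; apply continuous_Cplus_fun; apply continuous_mode_comp.
    + apply (continuous_comp fst fst); apply continuous_fst.
    + apply continuous_snd.
    + apply (continuous_comp fst snd); [apply continuous_fst | apply continuous_snd].
    + apply continuous_snd.
  - exists (2 * (455 * 216)); intros x y t _.
    eapply Rle_trans; [apply Cmod_triangle |].
    assert (Cmod (mode (coef nx ny) nt 0 x t) <= 455 * 216)
      by (apply Cmod_mode_bound; intros; apply Cmod_coef_le, Hx).
    assert (Cmod (mode (coef ny nx) nt 1 y t) <= 455 * 216)
      by (apply Cmod_mode_bound; intros; apply Cmod_coef_le, Hy).
    lra.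
  - intros x y t; rewrite !mode_periodic; split; reflexivity.
Qed.

Lemma unif_C2_u : unif_C2 (u_der (0, 0, 0)%nat).
Proof.
  destruct (u_der_regular (0, 0, 0)%nat) as [Hc [Hb _]]; simpl; try lia.
  split; [exact Hc | split; [exact Hb |]].
  exists (fun i => u_der (bump i (0, 0, 0)%nat)), (fun i j => u_der (bump j (bump i (0, 0, 0)%nat))).
  intros i Hi; split; [apply is_partial_u_der; destruct i as [|[|i]]; simpl; lia |].
  destruct (u_der_regular (bump i (0, 0, 0)%nat)) as [Hci [Hbi _]];
    [destruct i as [|[|i]]; simpl; lia .. |].
  split; [exact Hci | split; [exact Hbi |]].
  intros j Hj; split; [apply is_partial_u_der; destruct i as [|[|i]], j as [|[|j]]; simpl; lia |].
  destruct (u_der_regular (bump j (bump i (0, 0, 0)%nat))) as [Hcj [Hbj _]];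
    [destruct i as [|[|i]], j as [|[|j]]; simpl; lia .. |].
  split; assumption.
Qed.

Lemma Cmod_u_le (x y t : R) : Cmod (u_der (0, 0, 0)%nat x y t) <= gauss t.
Proof.
  simpl; eapply Rle_trans; [apply Cmod_triangle |]; rewrite !Cmod_mode; simpl coef.
  rewrite Cmod_1, !Rmult_1_r; unfold profile; rewrite cos_phase_1.
  pose proof (cos4_sin4_bounds (phase 0 t)); pose proof (gauss_pos t).
  pose proof (pow2_ge_0 (cos (phase 0 t) ^ 2)); pose proof (pow2_ge_0 (sin (phase 0 t) ^ 2)).
  rewrite !Rabs_right; nra.
Qed.

Lemma u_nonzero : u_der (0, 0, 0)%nat 0 0 0 <> 0%C.
Proof.
  intros E; apply (f_equal fst) in E; simpl in E.
  rewrite !Rmult_0_r, cos_0, sin_0 in E; unfold profile in E; rewrite cos_phase_1 in E.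
  pose proof (cos4_sin4_bounds (phase 0 0)); pose proof (gauss_pos 0).
  nra.
Qed.

(** * The drift *)

Definition residual : fun3 :=
  fun x y t =>
    (u_der (0, 0, 1)%nat x y t - u_der (2, 0, 0)%nat x y t - u_der (0, 2, 0)%nat x y t)%C.

Definition grad_sq (x y t : R) : R :=
  Cmod (u_der (1, 0, 0)%nat x y t) ^ 2 + Cmod (u_der (0, 1, 0)%nat x y t) ^ 2.

Definition drift (v : fun3) : fun3 :=
  fun x y t => (residual x y t * Cconj (v x y t) / RtoC (grad_sq x y t))%C.

Lemma grad_sq_eq (x y t : R) :
  grad_sq x y t = (freq 0 t * profile 0 0 t) ^ 2 + (freq 1 t * profile 0 1 t) ^ 2.
Proof.
  unfold grad_sq; simpl u_der; rewrite !mode_zero, Cplus_0_l, Cplus_0_r, !Cmod_mode.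
  simpl coef; rewrite !Cmult_1_r, !Cmod_mult, Cmod_Ci, !Cmod_R, !Rmult_1_l.
  rewrite !Rpow_mult_distr, !pow2_abs; ring.
Qed.

Lemma grad_sq_pos (x y t : R) : 0 < grad_sq x y t.
Proof.
  rewrite grad_sq_eq.
  pose proof (profile_energy_lower t (freq 0 t) (freq 1 t)
                (theta_le_double_freq 0 t) (theta_le_double_freq 1 t)).
  pose proof (theta_gt_1 t); pose proof (gauss_pos t).
  assert (0 < theta t ^ 2 * gauss t ^ 2) by (apply Rmult_lt_0_compat; apply pow_lt; lra).
  lra.
Qed.

Lemma residual_eq (x y t : R) :
  residual x y t =
  (RtoC (profile 1 0 t + freq 0 t ^ 2 * profile 0 0 t) * cis (freq 0 t * x)
   + RtoC (profile 1 1 t + freq 1 t ^ 2 * profile 0 1 t) * cis (freq 1 t * y))%C.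
Proof.
  unfold residual; simpl u_der; rewrite !mode_zero.
  unfold mode, mode_at; simpl coef.
  apply injective_projections; simpl; ring.
Qed.

Lemma Cmod_residual_sq_le (x y t : R) : Cmod (residual x y t) ^ 2 <= 18432 * grad_sq x y t.
Proof.
  rewrite residual_eq, grad_sq_eq.
  pose proof (profile_residual_bound 0 t (freq 0 t) (freq_bounds 0 t)).
  pose proof (profile_residual_bound 1 t (freq 1 t) (freq_bounds 1 t)).
  pose proof (profile_energy_lower t (freq 0 t) (freq 1 t)
                (theta_le_double_freq 0 t) (theta_le_double_freq 1 t)).
  set (A0 := profile 1 0 t + freq 0 t ^ 2 * profile 0 0 t) in *.
  set (A1 := profile 1 1 t + freq 1 t ^ 2 * profile 0 1 t) in *.
  set (N := (RtoC A0 * cis (freq 0 t * x) + RtoC A1 * cis (freq 1 t * y))%C).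
  assert (HN : Cmod N <= Rabs A0 + Rabs A1).
  { eapply Rle_trans; [apply Cmod_triangle |]; rewrite !Cmod_mult, !Cmod_R, !Cmod_cis; lra. }
  assert ((Rabs A0 + Rabs A1) ^ 2 <= 2 * (A0 ^ 2 + A1 ^ 2)).
  { rewrite <- (pow2_abs A0), <- (pow2_abs A1); pose proof (pow2_ge_0 (Rabs A0 - Rabs A1)); nra. }
  assert (Cmod N ^ 2 <= (Rabs A0 + Rabs A1) ^ 2)
    by (apply pow_incr; split; [apply Cmod_ge_0 | exact HN]).
  lra.
Qed.

Lemma Cmod_drift_le (v : fun3) (x y t : R) :
  Cmod (v x y t) ^ 2 <= grad_sq x y t -> Cmod (drift v x y t) <= 136.
Proof.
  intros Hv; pose proof (grad_sq_pos x y t) as Hg; pose proof (Cmod_residual_sq_le x y t).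
  assert (Hg0 : RtoC (grad_sq x y t) <> 0%C)
    by (intros E; apply (f_equal fst) in E; simpl in E; lra).
  unfold drift, Cdiv; rewrite !Cmod_mult, Cmod_conj, (Cmod_inv _ Hg0), Cmod_R, Rabs_right by lra.
  set (r := Cmod (residual x y t) * Cmod (v x y t) * / grad_sq x y t).
  assert (Hr : 0 <= r).
  { unfold r; apply Rmult_le_pos;
      [apply Rmult_le_pos; apply Cmod_ge_0 | apply Rlt_le, Rinv_0_lt_compat, Hg]. }
  assert (Hr2 : r ^ 2 <= 18432).
  { unfold r; rewrite !Rpow_mult_distr, pow_inv.
    apply Rle_trans with (18432 * grad_sq x y t * grad_sq x y t * / grad_sq x y t ^ 2).
    - apply Rmult_le_compat_r; [apply Rlt_le, Rinv_0_lt_compat, pow_lt, Hg |].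
      apply Rmult_le_compat; try apply pow2_ge_0; assumption.
    - right; field; lra. }
  nra.
Qed.

Lemma drift_equation (x y t : R) :
  u_der (0, 0, 1)%nat x y t =
  (u_der (2, 0, 0)%nat x y t + u_der (0, 2, 0)%nat x y t
   + drift (u_der (1, 0, 0)%nat) x y t * u_der (1, 0, 0)%nat x y t
   + drift (u_der (0, 1, 0)%nat) x y t * u_der (0, 1, 0)%nat x y t)%C.
Proof.
  pose proof (grad_sq_pos x y t) as Hg.
  assert (Hg0 : RtoC (grad_sq x y t) <> 0%C)
    by (intros E; apply (f_equal fst) in E; simpl in E; lra).
  unfold drift; revert Hg0; unfold grad_sq, residual.
  rewrite RtoC_plus, !Cmod2_conj.
  intros Hg0; field; exact Hg0.
Qed.

Lemma cont3_drift (v : fun3) : cont3 v -> cont3 (drift v).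
Proof.
  intros Hv x y t.
  assert (Hu : forall α, (fst (fst α) <= 2)%nat -> (snd (fst α) <= 2)%nat -> cont3 (u_der α))
    by (intros α H1 H2; apply (u_der_regular α H1 H2)).
  apply (continuous_ext (fun p : R * R * R =>
    (residual (fst (fst p)) (snd (fst p)) (snd p) * Cconj (v (fst (fst p)) (snd (fst p)) (snd p))
     * RtoC (/ grad_sq (fst (fst p)) (snd (fst p)) (snd p)))%C)).
  { intros p; unfold drift, Cdiv; rewrite RtoC_inv; [reflexivity |].
    apply Rgt_not_eq, grad_sq_pos. }
  apply continuous_Cmult_fun; [apply continuous_Cmult_fun |].
  - unfold residual.
    apply continuous_Cminus_fun; [apply continuous_Cminus_fun |]; apply Hu; simpl; lia.
  - apply continuous_Cconj_fun, Hv.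
  - apply continuous_RtoC_fun.
    apply (continuous_comp (fun p : R * R * R => grad_sq (fst (fst p)) (snd (fst p)) (snd p)) Rinv).
    + unfold grad_sq; apply (continuous_plus (V := R_NormedModule));
        apply continuous_Cmod_sq, Hu; simpl; lia.
    + apply continuous_Rinv, Rgt_not_eq, grad_sq_pos.
Qed.

Lemma periodic2_drift (v : fun3) : periodic2 v -> periodic2 (drift v).
Proof.
  intros Hv x y t.
  assert (Hu : forall α, (fst (fst α) <= 2)%nat -> (snd (fst α) <= 2)%nat -> periodic2 (u_der α))
    by (intros α H1 H2; apply (u_der_regular α H1 H2)).
  unfold drift, residual, grad_sq.
  destruct (Hv x y t) as [-> ->].
  repeat match goal with
  | |- context [u_der ?α (?x + 2 * PI) ?y ?t] =>
      rewrite (proj1 (Hu α ltac:(simpl; lia) ltac:(simpl; lia) x y t))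
  | |- context [u_der ?α ?x (?y + 2 * PI) ?t] =>
      rewrite (proj2 (Hu α ltac:(simpl; lia) ltac:(simpl; lia) x y t))
  end.
  split; reflexivity.
Qed.

Lemma bounded_half_drift (v : fun3) :
  (forall x y t, Cmod (v x y t) ^ 2 <= grad_sq x y t) -> bounded_half (drift v).
Proof. intros Hv; exists 136; intros x y t _; apply Cmod_drift_le, Hv. Qed.

Theorem theorem1p3 :
  exists (B1 B2 u ux uy ut uxx uyy : fun3),
    periodic2 B1 /\ periodic2 B2 /\ periodic2 u /\
    cont3 B1 /\ cont3 B2 /\ bounded_half B1 /\ bounded_half B2 /\
    unif_C2 u /\
    (exists x y t : R, 0 <= t /\ u x y t <> 0%C) /\
    is_partial 0 u ux /\ is_partial 1 u uy /\ is_partial 2 u ut /\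
    is_partial 0 ux uxx /\ is_partial 1 uy uyy /\
    (forall x y t : R, 0 <= t ->
       ut x y t = (uxx x y t + uyy x y t + B1 x y t * ux x y t + B2 x y t * uy x y t)%C) /\
    (exists c : R, 0 < c /\ exists T0 : R, forall T : R, T0 <= T ->
       forall x y t : R, T <= t -> Cmod (u x y t) <= exp (- c * exp (c * T))).
Proof.
  set (ux := u_der (1, 0, 0)%nat); set (uy := u_der (0, 1, 0)%nat).
  exists (drift ux), (drift uy), (u_der (0, 0, 0)%nat), ux, uy,
    (u_der (0, 0, 1)%nat), (u_der (2, 0, 0)%nat), (u_der (0, 2, 0)%nat).
  assert (Hgrad : forall x y t,
             Cmod (ux x y t) ^ 2 <= grad_sq x y t /\ Cmod (uy x y t) ^ 2 <= grad_sq x y t).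
  { intros x y t; unfold grad_sq; pose proof (pow2_ge_0 (Cmod (ux x y t)));
      pose proof (pow2_ge_0 (Cmod (uy x y t))); fold ux uy; lra. }
  split; [apply periodic2_drift, u_der_regular; simpl; lia |].
  split; [apply periodic2_drift, u_der_regular; simpl; lia |].
  split; [apply u_der_regular; simpl; lia |].
  split; [apply cont3_drift, u_der_regular; simpl; lia |].
  split; [apply cont3_drift, u_der_regular; simpl; lia |].
  split; [apply bounded_half_drift; apply Hgrad |].
  split; [apply bounded_half_drift; apply Hgrad |].
  split; [apply unif_C2_u |].
  split; [exists 0, 0, 0; split; [lra | apply u_nonzero] |].
  split; [apply (is_partial_u_der 0 (0, 0, 0)%nat); simpl; lia |].
  split; [apply (is_partial_u_der 1 (0, 0, 0)%nat); simpl; lia |].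
  split; [apply (is_partial_u_der 2 (0, 0, 0)%nat); simpl; lia |].
  split; [apply (is_partial_u_der 0 (1, 0, 0)%nat); simpl; lia |].
  split; [apply (is_partial_u_der 1 (0, 1, 0)%nat); simpl; lia |].
  split; [intros x y t _; apply drift_equation |].
  exists 1; split; [lra |]; exists 0; intros T _ x y t HT.
  rewrite <- Ropp_mult_distr_l, !Rmult_1_l.
  eapply Rle_trans; [apply Cmod_u_le | apply gauss_le_exp_exp, HT].
Qed.
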